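(* Let $h:(\mathbb{R}^n,0)\to(\mathbb{R}^n,0)$ be a bi-Lipschitz homeomorphism germ, let $A\subset\mathbb{R}^n$ be a set-germ at $0$ with $0\in\overline{A}$, and let $B\subset\mathbb{R}^n$ be a set-germ at $0$ with $0\in\overline{B}$. Assume that $A$ satisfies condition (SSP). Then $h(A)$ satisfies condition (SSP)-relative to $B$ if and only if $h(LD(A))$ satisfies condition (SSP)-relative to $B$.
   Context: For a set-germ $A\subset\mathbb{R}^n$ at $0$ with $0\in\overline A$, $D(A)=\{a\in S^{n-1}:\exists\, x_i\in A\setminus\{0\},\ x_i\to0,\ x_i/\|x_i\|\to a\}$ and $LD(A)=\{ta:a\in D(A),t\ge0\}$. For sequences, $\|u_m\|\ll\|v_m\|,\|w_m\|$ means $\|u_m\|/\|v_m\|\to0$ and $\|u_m\|/\|w_m\|\to0$. Given set-germs $A,B$ at $0$ with $0\in\overline A\cap\overline B$ and $D(A)\subseteq D(B)$, $A$ satisfies condition (SSP)-relative to $B$ if for every sequence $a_m\in B$ tending to $0$ with $\lim a_m/\|a_m\|\in D(A)$ there is a sequence $b_m\in A$ with $\|a_m-b_m\|\ll\|a_m\|,\|b_m\|$. Condition (SSP) (without reference) means (SSP)-relative to $\mathbb{R}^n$. A bi-Lipschitz homeomorphism germ is a homeomorphism germ $h$ with $h(0)=0$ and constants $0<K_1\le K_2$ with $K_1\|x-y\|\le\|h(x)-h(y)\|\le K_2\|x-y\|$ near $0$. *)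

From HB Require Import structures.
From mathcomp Require Import all_boot all_order all_algebra.
From mathcomp Require Import classical_sets reals.
Set Implicit Arguments. Unset Strict Implicit. Unset Printing Implicit Defensive.
Import Order.TTheory GRing.Theory Num.Theory.
Local Open Scope ring_scope.
Local Open Scope classical_set_scope.

Section Defs.
Variables (R : realType) (n : nat).
Local Notation vec := 'rV[R]_n.

Definition enorm (x : vec) : R := Num.sqrt (\sum_(i < n) x ord0 i ^+ 2).

Definition eball0 (r : R) : set vec := [set x | enorm x < r].

Definition seq_cvg (u : nat -> vec) (l : vec) : Prop :=
  forall e : R, 0 < e -> exists N : nat, forall m : nat, (N <= m)%N ->
    enorm (u m - l) < e.

Definition zero_in_closure (A : set vec) : Prop :=
  forall e : R, 0 < e -> exists x, A x /\ enorm x < e.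

Definition Dir (A : set vec) : set vec :=
  [set a | exists x : nat -> vec,
      (forall m, A (x m) /\ x m != 0) /\ seq_cvg x 0 /\
      seq_cvg (fun m => (enorm (x m))^-1 *: x m) a].

Definition LD (A : set vec) : set vec :=
  [set v | exists t : R, exists a : vec, 0 <= t /\ Dir A a /\ v = t *: a].

Definition negligible (u v : nat -> vec) : Prop :=
  forall e : R, 0 < e -> exists N : nat, forall m : nat, (N <= m)%N ->
    enorm (u m) <= e * enorm (v m).

(* condition (SSP)-relative to B (includes the standing requirement
   D(A) ⊆ D(B) under which the notion is defined) *)
Definition SSP_rel (A B : set vec) : Prop :=
  Dir A `<=` Dir B /\
  forall a : nat -> vec,
    (forall m, B (a m) /\ a m != 0) -> seq_cvg a 0 ->
    (exists d, Dir A d /\ seq_cvg (fun m => (enorm (a m))^-1 *: a m) d) ->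
    exists b : nat -> vec, (forall m, A (b m)) /\
      negligible (fun m => a m - b m) a /\
      negligible (fun m => a m - b m) b.

Definition SSP (A : set vec) : Prop := SSP_rel A setT.

(* h is a bi-Lipschitz homeomorphism germ (R^n,0) -> (R^n,0), realised on the
   ball of radius r: h(0)=0, bi-Lipschitz with constants 0<K1<=K2 on the ball,
   and the image of the ball contains a neighbourhood of 0. *)
Definition bilip_homeo_germ (h : vec -> vec) (r K1 K2 : R) : Prop :=
  h 0 = 0 /\ 0 < r /\ 0 < K1 /\ K1 <= K2 /\
  (forall x y, enorm x < r -> enorm y < r ->
     K1 * enorm (x - y) <= enorm (h x - h y) /\
     enorm (h x - h y) <= K2 * enorm (x - y)) /\
  (exists s : R, 0 < s /\ forall y, enorm y < s -> exists x, enorm x < r /\ h x = y).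

End Defs.

From HB Require Import structures.
From mathcomp Require Import all_boot all_order all_algebra.
From mathcomp Require Import classical_sets reals.
From mathcomp Require Import boolp filter topology normedtype sequences.
From mathcomp Require Import interval_inference ring lra.
Set Implicit Arguments. Unset Strict Implicit. Unset Printing Implicit Defensive.
Import Order.TTheory GRing.Theory Num.Theory.
Import numFieldNormedType.Exports.
Local Open Scope ring_scope.
Local Open Scope classical_set_scope.

(* Say that S approximates T at 0 if every sequence of T \ {0} tending to 0
   lies within o(|y_m|) of S.  Condition (SSP)-relative to B, together with the
   inclusion D(A) ⊆ D(B), only depends on a set up to mutual approximation:
   directions pass to approximating sequences and o(|a_m|) errors compose.
   LD(A) always approximates A: along a subsequence the directions of y_m
   converge to some a in D(A), and then |y_m| a is close to y_m.  Conversely,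
   (SSP) says that A approximates the sequences of LD(A) whose directions
   converge, and this covers all of them after extracting subsequences, D(A)
   being closed.  Finally, mutual approximation survives restriction to a ball
   and the bi-Lipschitz map h, which distorts distances and norms by bounded
   factors. *)

(* The direction of x, with the junk value 0 at x = 0. *)
Local Notation dirv x := ((enorm x)^-1 *: x).

Section EuclideanNorm.
Variables (R : realType) (n : nat).
Local Notation vec := 'rV[R]_n.
Implicit Types x y : vec.

Definition dotv x y : R := \sum_(i < n) x ord0 i * y ord0 i.

Lemma dotvv_ge0 x : 0 <= dotv x x.
Proof. by apply: sumr_ge0 => i _; exact: sqr_ge0. Qed.

Lemma enormE x : enorm x = Num.sqrt (dotv x x).
Proof. by []. Qed.

Lemma enorm_ge0 x : 0 <= enorm x.
Proof. exact: sqrtr_ge0. Qed.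

Lemma enorm_sqr x : enorm x ^+ 2 = dotv x x.
Proof. by rewrite sqr_sqrtr ?dotvv_ge0. Qed.

Lemma enorm0 : enorm (0 : vec) = 0.
Proof. by rewrite enormE /dotv big1 ?sqrtr0 // => i _; rewrite mxE mul0r. Qed.

Lemma enorm_eq0 x : (enorm x == 0) = (x == 0).
Proof.
apply/idP/eqP => [|->]; last by rewrite enorm0.
rewrite enormE sqrtr_eq0 => x_le0; apply/rowP => i; rewrite mxE.
have x_eq0 : dotv x x = 0 by apply/eqP; rewrite eq_le x_le0 dotvv_ge0.
have /eqP := @psumr_eq0P _ _ xpredT (fun i => x ord0 i * x ord0 i)
  (fun i _ => sqr_ge0 (x ord0 i)) x_eq0 i isT.
by rewrite mulf_eq0 orbb => /eqP.
Qed.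

Lemma enorm_gt0 x : (0 < enorm x) = (x != 0).
Proof. by rewrite lt_def enorm_eq0 enorm_ge0 andbT. Qed.

Lemma enormZ (c : R) x : enorm (c *: x) = `|c| * enorm x.
Proof.
rewrite enormE -sqrtr_sqr -sqrtrM ?sqr_ge0 //; congr Num.sqrt.
by rewrite /dotv mulr_sumr; apply: eq_bigr => i _; rewrite !mxE mulrACA -!expr2.
Qed.

Lemma enormN x : enorm (- x) = enorm x.
Proof. by rewrite -scaleN1r enormZ normrN normr1 mul1r. Qed.

Lemma enormB x y : enorm (x - y) = enorm (y - x).
Proof. by rewrite -enormN opprB. Qed.

Lemma enorm_coord x i : `|x ord0 i| <= enorm x.
Proof.
rewrite -sqrtr_sqr ler_sqrt ?dotvv_ge0 // /dotv (bigD1 i) //= expr2 lerDl.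
by apply: sumr_ge0 => j _; exact: sqr_ge0.
Qed.

Lemma enorm_le_sum x : enorm x <= \sum_(i < n) `|x ord0 i|.
Proof.
have sum_ge0 : 0 <= \sum_(i < n) `|x ord0 i| by apply: sumr_ge0.
rewrite -(ger0_norm sum_ge0) -sqrtr_sqr ler_sqrt ?sqr_ge0 //.
rewrite expr2 mulr_suml; apply: ler_sum => i _.
rewrite mulr_sumr (bigD1 i) //= -normrM ger0_norm ?sqr_ge0 // lerDl.
by apply: sumr_ge0 => j _; rewrite mulr_ge0.
Qed.

Lemma dotvvD x y : dotv (x + y) (x + y) = dotv x x + 2 * dotv x y + dotv y y.
Proof.
by rewrite /dotv mulr_sumr -!big_split /=; apply: eq_bigr => i _; rewrite !mxE; ring.
Qed.

Lemma dotvZl (c : R) x y : dotv (c *: x) y = c * dotv x y.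
Proof. by rewrite /dotv mulr_sumr; apply: eq_bigr => i _; rewrite mxE mulrA. Qed.

Lemma dotvZr (c : R) x y : dotv x (c *: y) = c * dotv x y.
Proof. by rewrite /dotv mulr_sumr; apply: eq_bigr => i _; rewrite mxE mulrCA. Qed.

Lemma CauchySchwarz x y : dotv x y ^+ 2 <= dotv x x * dotv y y.
Proof.
have [y0 | y_neq0] := eqVneq y 0.
  by rewrite /dotv big1 ?expr0n ?mulr_ge0 ?dotvv_ge0 // => i _; rewrite y0 mxE mulr0.
have yy_gt0 : 0 < dotv y y by rewrite -enorm_sqr exprn_gt0 ?enorm_gt0.
pose t := - dotv x y / dotv y y.
have : 0 <= dotv (x + t *: y) (x + t *: y) := dotvv_ge0 _.
have -> : dotv (x + t *: y) (x + t *: y) = dotv x x - dotv x y ^+ 2 / dotv y y.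
  by rewrite dotvvD dotvZl !dotvZr /t; field; rewrite gt_eqF.
by rewrite subr_ge0 ler_pdivrMr.
Qed.

Lemma dotv_le_enorm x y : dotv x y <= enorm x * enorm y.
Proof.
apply: le_trans (ler_norm _) _.
by rewrite -sqrtr_sqr !enormE -sqrtrM ?dotvv_ge0 // ler_sqrt ?mulr_ge0 ?dotvv_ge0 ?CauchySchwarz.
Qed.

Lemma enormD x y : enorm (x + y) <= enorm x + enorm y.
Proof.
have sum_ge0 : 0 <= enorm x + enorm y by rewrite addr_ge0 ?enorm_ge0.
rewrite -(ger0_norm sum_ge0) -sqrtr_sqr [enorm (x + y)]enormE ler_sqrt ?sqr_ge0 //.
by rewrite dotvvD sqrrD !enorm_sqr lerD2r lerD2l mulr_natl !mulr2n lerD ?dotv_le_enorm.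
Qed.

Lemma enorm_distD x y z : enorm (x - z) <= enorm (x - y) + enorm (y - z).
Proof. by have := enormD (x - y) (y - z); rewrite addrA subrK. Qed.

Lemma enorm_le_distD x y : enorm x <= enorm y + enorm (x - y).
Proof. by have := enormD y (x - y); rewrite addrC subrK. Qed.

Lemma enorm_dist_dist x y : `|enorm x - enorm y| <= enorm (x - y).
Proof.
have := enorm_le_distD x y; have := enorm_le_distD y x; rewrite [enorm (y - x)]enormB.
by rewrite ler_norml => *; apply/andP; split; lra.
Qed.

Lemma dirvK x : enorm x *: dirv x = x.
Proof.
have [-> | x_neq0] := eqVneq x 0; first by rewrite !scaler0.
by rewrite scalerA mulfV ?scale1r // enorm_eq0.
Qed.

Lemma enorm_dirv x : x != 0 -> enorm (dirv x) = 1.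
Proof. by move=> x_neq0; rewrite enormZ ger0_norm ?invr_ge0 ?enorm_ge0 // mulVf // enorm_eq0. Qed.

Lemma enorm_dirv_le1 x : enorm (dirv x) <= 1.
Proof. by have [-> | /enorm_dirv ->] := eqVneq x 0; rewrite ?scaler0 ?enorm0 ?ler01. Qed.

Lemma enormB_scale_dirv x a : enorm (x - enorm x *: a) = enorm x * enorm (dirv x - a).
Proof. by rewrite -{1}(dirvK x) -scalerBr enormZ ger0_norm ?enorm_ge0. Qed.

Lemma enorm_dirvB x y : x != 0 -> y != 0 ->
  enorm (dirv x - dirv y) * enorm y <= 2 * enorm (x - y).
Proof.
move=> x_neq0 y_neq0; have x_gt0 : 0 < enorm x by rewrite enorm_gt0.
rewrite mulrC -{1}[enorm y]ger0_norm ?enorm_ge0 // -enormZ scalerBr (dirvK y).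
have -> : enorm y *: dirv x - y = (x - y) + ((enorm y - enorm x) / enorm x) *: x.
  by rewrite mulrBl mulfV ?gt_eqF // scalerBl scale1r scalerA addrCA addrAC subrr add0r.
apply: le_trans (enormD _ _) _.
rewrite enormZ normrM [`|_^-1|]ger0_norm ?invr_ge0 ?enorm_ge0 // -mulrA mulVf ?gt_eqF // mulr1.
by have := enorm_dist_dist y x; rewrite [enorm (y - x)]enormB; lra.
Qed.

End EuclideanNorm.

Lemma near_ooP (P : nat -> Prop) :
  (\forall m \near \oo, P m) <-> exists N, forall m, (N <= m)%N -> P m.
Proof. by split=> [[N _ PN]|[N PN]]; exists N. Qed.

Lemma near_oo_subseq {g : nat -> nat} {P : nat -> Prop} : (forall k, (k <= g k)%N) ->
  (\forall m \near \oo, P m) -> \forall k \near \oo, P (g k).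
Proof.
move=> g_ge /near_ooP[N PN]; apply/near_ooP; exists N => k Nk.
exact/PN/(leq_trans Nk).
Qed.

Lemma not_near_oo (P : nat -> Prop) : ~ (\forall m \near \oo, P m) ->
  exists g : nat -> nat, (forall k, (k <= g k)%N) /\ forall k, ~ P (g k).
Proof.
move=> notP; suff /choice[g gP] : forall k, exists m, (k <= m)%N /\ ~ P m.
  by exists g; split => k; have [] := gP k.
move=> k; apply: contrapT => allP; apply/notP/near_ooP; exists k => m km.
by apply: contrapT => Pm; apply: allP; exists m.
Qed.

Lemma real_bounded_subseq (R : realType) (u : nat -> R) (M : R) :
  (forall m, `|u m| <= M) ->
  exists f : nat -> nat, (forall m, (m <= f m)%N) /\
    exists l, forall e : R, 0 < e -> \forall m \near \oo, `|u (f m) - l| < e.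
Proof.
move=> u_le; have u_bnd : bounded_fun u.
  exists M; split; first exact: num_real.
  by move=> x Mx y _ /=; exact: le_trans (u_le y) (ltW Mx).
have [f /increasing_seqP f_incr /cvg_ex[l fl]] := bolzano_weierstrass u_bnd.
exists f; split.
  by elim=> // m IH; apply: leq_ltn_trans IH _; have := f_incr m; rewrite ltEnat.
exists l => e e_gt0; move/cvgrPdist_lt: fl => /(_ e e_gt0).
by apply: filterS => m; rewrite distrC.
Qed.

Section Sequences.
Variables (R : realType) (n : nat).
Local Notation vec := 'rV[R]_n.
Implicit Types (u v : nat -> vec) (l : vec).

Lemma seq_cvgP u l :
  seq_cvg u l <-> forall e : R, 0 < e -> \forall m \near \oo, enorm (u m - l) < e.
Proof. by split=> cvg_u e /cvg_u /near_ooP. Qed.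

Lemma negligibleP u v : negligible u v <->
  forall e : R, 0 < e -> \forall m \near \oo, enorm (u m) <= e * enorm (v m).
Proof. by split=> neg_u e /neg_u /near_ooP. Qed.

Lemma seq_cvg_subseq u l (g : nat -> nat) : (forall k, (k <= g k)%N) ->
  seq_cvg u l -> seq_cvg (u \o g) l.
Proof. by move=> g_ge /seq_cvgP cvg_u; apply/seq_cvgP => e /cvg_u /(near_oo_subseq g_ge). Qed.

Lemma seq_cvg_coord u (L : 'I_n -> R) :
  (forall i (e : R), 0 < e -> \forall m \near \oo, `|u m ord0 i - L i| < e) ->
  seq_cvg u (\row_i L i).
Proof.
move=> cvg_coord; apply/seq_cvgP => e e_gt0.
have e'_gt0 : 0 < e / n.+1%:R by rewrite divr_gt0 // ltr0n.
have /choice[N coordN] : forall i : 'I_n, exists N, forall m, (N <= m)%N ->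
    `|u m ord0 i - L i| < e / n.+1%:R.
  by move=> i; apply/near_ooP/cvg_coord.
apply/near_ooP; exists (\max_i N i) => m Nm.
apply: le_lt_trans (enorm_le_sum _) _.
apply: (@le_lt_trans _ _ (\sum_(i < n) e / n.+1%:R)).
  apply: ler_sum => i _; rewrite !mxE; apply/ltW/coordN.
  exact: leq_trans (leq_bigmax i) Nm.
rewrite sumr_const card_ord -[_ *+ n]mulr_natr mulrAC ltr_pdivrMr ?ltr0n //.
by rewrite ltr_pM2l // ltr_nat.
Qed.

Lemma enorm_bounded_subseq u (M : R) : (forall m, enorm (u m) <= M) ->
  exists f : nat -> nat, (forall m, (m <= f m)%N) /\ exists l, seq_cvg (u \o f) l.
Proof.
move=> u_le.
have coords_cvg k : (k <= n)%N -> exists f : nat -> nat, (forall m, (m <= f m)%N) /\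
    forall i : 'I_n, (i < k)%N -> exists li : R,
      forall e : R, 0 < e -> \forall m \near \oo, `|u (f m) ord0 i - li| < e.
  elim: k => [|k IH] kn; first by exists id.
  have [f [f_ge f_cvg]] := IH (ltnW kn).
  pose i0 := Ordinal kn.
  have [g [g_ge [l gl]]] := @real_bounded_subseq R (fun m => u (f m) ord0 i0) M
    (fun m => le_trans (enorm_coord _ _) (u_le (f m))).
  exists (f \o g); split=> [m|i]; first exact: leq_trans (g_ge m) (f_ge (g m)).
  rewrite ltnS leq_eqVlt => /orP[/eqP ik|ik].
    by exists l; have -> : i = i0 by apply: val_inj.
  have [li fli] := f_cvg i ik; exists li => e /fli; exact: near_oo_subseq.
have [f [f_ge f_cvg]] := coords_cvg n (leqnn n).
have /choice[L fL] := fun i : 'I_n => f_cvg i (ltn_ord i).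
by exists f; split => //; exists (\row_i L i); apply: seq_cvg_coord.
Qed.

Lemma near_oo_by_direction u (H P : nat -> Prop) :
  (\forall m \near \oo, H m) ->
  (forall (g : nat -> nat) l, (forall k, (k <= g k)%N) ->
     (forall k, H (g k) /\ ~ P (g k)) -> ~ seq_cvg (fun k => dirv (u (g k))) l) ->
  \forall m \near \oo, P m.
Proof.
move=> Hu no_bad_cvg; apply: contrapT => notP.
have [g [g_ge bad]] : exists g : nat -> nat, (forall k, (k <= g k)%N) /\
    forall k, H (g k) /\ ~ P (g k).
  have /not_near_oo[g [g_ge gP]] : ~ \forall m \near \oo, (H m -> P m).
    by move=> HP; apply: notP; apply: filterS2 Hu HP => m Hm /(_ Hm).
  exists g; split => // k; split=> [|Pk]; last by apply: (gP k).
  by apply: contrapT => nH; apply: (gP k) => /nH [].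
have [f [f_ge [l fl]]] := @enorm_bounded_subseq (fun k => dirv (u (g k))) 1
  (fun k => enorm_dirv_le1 _).
apply: (no_bad_cvg (g \o f) l) => [k|k|//]; last exact: bad.
exact: leq_trans (f_ge k) (g_ge _).
Qed.

Lemma negligible_le2 u v : negligible (fun m => u m - v m) u ->
  \forall m \near \oo, enorm (v m) <= 2 * enorm (u m) /\ enorm (u m) <= 2 * enorm (v m).
Proof.
move=> /negligibleP uv; have /uv : 0 < 2^-1 :> R by rewrite invr_gt0.
apply: filterS => m uv_le.
have := enorm_le_distD (u m) (v m); have := enorm_le_distD (v m) (u m).
by rewrite [enorm (v m - u m)]enormB; have := enorm_ge0 (u m); lra.
Qed.

Lemma negligible_neq0 u v : (\forall m \near \oo, u m != 0) ->
  negligible (fun m => u m - v m) u -> \forall m \near \oo, v m != 0.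
Proof.
move=> u_neq0 /negligible_le2 uv_le; apply: filterS2 u_neq0 uv_le => m.
rewrite -!enorm_gt0 => u_gt0 [_ u_le]; have := enorm_ge0 (v m); lra.
Qed.

Lemma negligible_sym u v : negligible (fun m => u m - v m) u ->
  negligible (fun m => u m - v m) v.
Proof.
move=> uv; have u_le2 := negligible_le2 uv; move/negligibleP: uv => uv.
apply/negligibleP => e e_gt0; have e2_gt0 : 0 < e / 2 by rewrite divr_gt0.
near=> m.
have u_le : enorm (u m) <= 2 * enorm (v m) by near: m; apply: filterS u_le2 => k [].
have uv_le : enorm (u m - v m) <= e / 2 * enorm (u m) by near: m; exact: uv.
nra.
Unshelve. all: by end_near. Qed.

Lemma negligible_trans u v w : negligible (fun m => u m - v m) u ->
  negligible (fun m => v m - w m) v -> negligible (fun m => u m - w m) u.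
Proof.
move=> uv vw; apply/negligibleP => e e_gt0.
have e2_gt0 : 0 < e / 2 by rewrite divr_gt0.
have e4_gt0 : 0 < e / 4 by rewrite divr_gt0.
have v_le2 := negligible_le2 uv; move/negligibleP: uv => uv; move/negligibleP: vw => vw.
near=> m; apply: le_trans (enorm_distD _ (v m) _) _.
have v_le : enorm (v m) <= 2 * enorm (u m) by near: m; apply: filterS v_le2 => k [].
have uv_le : enorm (u m - v m) <= e / 2 * enorm (u m) by near: m; exact: uv.
have vw_le : enorm (v m - w m) <= e / 4 * enorm (v m) by near: m; exact: vw.
nra.
Unshelve. all: by end_near. Qed.

Lemma negligible_cvg0 u v : seq_cvg u 0 -> negligible (fun m => u m - v m) u ->
  seq_cvg v 0.
Proof.
move=> /seq_cvgP u0 /negligible_le2 uv_le; apply/seq_cvgP => e e_gt0.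
have e2_gt0 : 0 < e / 2 by rewrite divr_gt0.
near=> m; rewrite subr0.
have u_lt : enorm (u m - 0) < e / 2 by near: m; exact: u0.
have v_le : enorm (v m) <= 2 * enorm (u m) by near: m; apply: filterS uv_le => k [].
by rewrite subr0 in u_lt; lra.
Unshelve. all: by end_near. Qed.

Lemma negligible_dirv u v d : (\forall m \near \oo, u m != 0) ->
  negligible (fun m => u m - v m) u ->
  seq_cvg (fun m => dirv (u m)) d -> seq_cvg (fun m => dirv (v m)) d.
Proof.
move=> u_neq0 uv /seq_cvgP ud; apply/seq_cvgP => e e_gt0.
have e2_gt0 : 0 < e / 2 by rewrite divr_gt0.
have e4_gt0 : 0 < e / 4 by rewrite divr_gt0.
have v_neq0 := negligible_neq0 u_neq0 uv; move/negligibleP: uv => uv.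
near=> m; apply: le_lt_trans (enorm_distD _ (dirv (u m)) _) _.
have u_neq0m : u m != 0 by near: m.
have v_neq0m : v m != 0 by near: m.
have u_gt0 : 0 < enorm (u m) by rewrite enorm_gt0.
have uv_le : enorm (u m - v m) <= e / 4 * enorm (u m) by near: m; exact: uv.
have ud_lt : enorm (dirv (u m) - d) < e / 2 by near: m; exact: ud.
have := enorm_dirvB v_neq0m u_neq0m; rewrite [enorm (v m - u m)]enormB.
nra.
Unshelve. all: by end_near. Qed.

End Sequences.

Section Directions.
Variables (R : realType) (n : nat).
Local Notation vec := 'rV[R]_n.
Implicit Types (A : set vec) (a l : vec).

Lemma Dir_enorm A a : Dir A a -> enorm a = 1.
Proof.
move=> [x [x_neq0 [_ xa]]]; apply/eqP; rewrite -subr_eq0 -normr_le0.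
apply/ler_addgt0Pr => e e_gt0; rewrite add0r.
have [N xaN] := xa e e_gt0.
have dist_le := enorm_dist_dist a (dirv (x N)).
rewrite enorm_dirv ?(x_neq0 N).2 // enormB in dist_le.
exact: le_trans dist_le (ltW (xaN N (leqnn N))).
Qed.

Lemma Dir_near A (x : nat -> vec) a : (\forall m \near \oo, A (x m) /\ x m != 0) ->
  seq_cvg x 0 -> seq_cvg (fun m => dirv (x m)) a -> Dir A a.
Proof.
move=> /near_ooP[N xN] x0 xa; exists (fun k => x (k + N)%N); split.
  by move=> k; apply: xN; rewrite leq_addl.
have shift_ge k : (k <= k + N)%N by rewrite leq_addr.
by split; [exact: (seq_cvg_subseq shift_ge x0) | exact: (seq_cvg_subseq shift_ge xa)].
Qed.

Lemma Dir_closed A (a : nat -> vec) l : (forall k, Dir A (a k)) -> seq_cvg a l -> Dir A l.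
Proof.
move=> Dir_a /seq_cvgP al.
have /choice[z zP] : forall k, exists z, (A z /\ z != 0) /\
    enorm z < k.+1%:R^-1 /\ enorm (dirv z - a k) < k.+1%:R^-1.
  move=> k; have [x [x_neq0 [/seq_cvgP x0 /seq_cvgP xa]]] := Dir_a k.
  have k_gt0 : 0 < k.+1%:R^-1 :> R by rewrite invr_gt0 ltr0n.
  have [N _ xN] := filterI (x0 _ k_gt0) (xa _ k_gt0).
  by exists (x N); have [] := xN N (leqnn N); rewrite subr0.
exists z; split=> [k|]; first exact: (zP k).1.
split; apply/seq_cvgP => e e_gt0.
  near=> k; rewrite subr0; apply: lt_trans (zP k).2.1 _.
  by near: k; exact: near_infty_natSinv_lt (PosNum e_gt0).
have e2_gt0 : 0 < e / 2 by rewrite divr_gt0.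
near=> k; apply: le_lt_trans (enorm_distD _ (a k) _) _; rewrite [e]splitr ltrD //.
  apply: lt_trans (zP k).2.2 _.
  by near: k; exact: near_infty_natSinv_lt (PosNum e2_gt0).
by near: k; exact: al.
Unshelve. all: by end_near. Qed.

Lemma dirv_LD A y : LD A y -> y != 0 -> Dir A (dirv y).
Proof.
move=> [t [a [t_ge0 [Da ->]]]] ta_neq0.
have t_neq0 : t != 0 by apply: contraNneq ta_neq0 => ->; rewrite scale0r.
by rewrite enormZ (Dir_enorm Da) mulr1 ger0_norm // scalerA mulVf // scale1r.
Qed.

End Directions.

Section Diagonal.
Variables (T : Type) (x0 : T) (Q : nat -> nat -> T -> Prop).
Hypothesis Q_antitone : forall k m z, Q k.+1 m z -> Q k m z.

Fixpoint pick_below (m j : nat) : T :=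
  if j is j'.+1 then
    if pselect (exists z, Q j' m z) is left ex then sval (cid ex) else pick_below m j'
  else x0.

Lemma Q_leq k j m z : (k <= j)%N -> Q j m z -> Q k m z.
Proof.
elim: j => [|j IH]; first by rewrite leqn0 => /eqP->.
by rewrite leq_eqVlt => /orP[/eqP-> //|kj] /Q_antitone; exact: IH.
Qed.

Lemma pick_belowP m j k : (k < j)%N -> (exists z, Q k m z) -> Q k m (pick_below m j).
Proof.
elim: j => // j IH; rewrite ltnS => kj Qk /=.
case: pselect => [ex | no_Qj]; first exact: Q_leq kj (svalP (cid ex)).
move: kj; rewrite leq_eqVlt => /orP[/eqP kj | kj]; last exact: IH.
by rewrite kj in Qk.
Qed.

Lemma near_oo_diagonal : (forall k, \forall m \near \oo, exists z, Q k m z) ->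
  exists x : nat -> T, forall k, \forall m \near \oo, Q k m (x m).
Proof.
move=> Q_ex; exists (fun m => pick_below m m.+1) => k; near=> m.
by apply: pick_belowP; [rewrite ltnS; near: m; exact: nbhs_infty_ge | near: m].
Unshelve. all: by end_near. Qed.

End Diagonal.

Section Approximation.
Variables (R : realType) (n : nat).
Local Notation vec := 'rV[R]_n.
Implicit Types (S T X Y : set vec) (y : nat -> vec).

Definition approximates S T : Prop :=
  forall y, (\forall m \near \oo, T (y m) /\ y m != 0) -> seq_cvg y 0 ->
  forall e : R, 0 < e ->
    \forall m \near \oo, exists2 z, S z & enorm (y m - z) <= e * enorm (y m).

Lemma approximates_seq S T y : approximates S T ->
  (\forall m \near \oo, T (y m) /\ y m != 0) -> seq_cvg y 0 ->
  exists x, (forall m, S (x m)) /\ negligible (fun m => y m - x m) y.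
Proof.
move=> ST yT y0.
pose Q k m z := S z /\ enorm (y m - z) <= k.+1%:R^-1 * enorm (y m).
have [x xQ] : exists x, forall k, \forall m \near \oo, Q k m (x m).
  apply: (near_oo_diagonal 0) => [k m z [Sz yz_le] | k].
    split=> //; apply: le_trans yz_le _; rewrite ler_wpM2r ?enorm_ge0 //.
    by rewrite lef_pV2 ?posrE ?ltr0n // ler_nat.
  have k_gt0 : 0 < k.+1%:R^-1 :> R by rewrite invr_gt0 ltr0n.
  by apply: filterS (ST y yT y0 _ k_gt0) => m [z Sz yz_le]; exists z.
have [p Sp] : exists p, S p by have [m [Sxm _]] := filter_ex (xQ 0%N); exists (x m).
pose x' m := if pselect (S (x m)) is left _ then x m else p.
exists x'; split=> [m|]; first by rewrite /x'; case: pselect.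
apply/negligibleP => e e_gt0.
have [k k_lt] := filter_ex (near_infty_natSinv_lt (PosNum e_gt0)).
apply: filterS (xQ k) => m [Sxm yx_le]; rewrite /x'; case: pselect => // _.
by apply: le_trans yx_le _; rewrite ler_wpM2r ?enorm_ge0 ?ltW.
Qed.

Lemma approximates_Dir S T : approximates S T -> Dir T `<=` Dir S.
Proof.
move=> ST d [y [yT [y0 yd]]].
have [x [Sx yx]] := approximates_seq ST (nearW _ yT) y0.
have y_neq0 : \forall m \near \oo, y m != 0 by apply: nearW => // m; exact: (yT m).2.
apply: (Dir_near (x := x)); last exact: negligible_dirv y_neq0 yx yd.
  by apply: filterS (negligible_neq0 y_neq0 yx) => m; split.
exact: negligible_cvg0 y0 yx.
Qed.

Lemma SSP_rel_approximates X Y B : approximates X Y -> approximates Y X ->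
  SSP_rel X B -> SSP_rel Y B.
Proof.
move=> XY YX [DirXB XB]; split=> [d /(approximates_Dir XY) /DirXB //|a aB a0 [d [Yd ad]]].
have [b [Xb [ab_a ab_b]]] := XB a aB a0 (ex_intro _ d (conj (approximates_Dir XY Yd) ad)).
have a_neq0 : \forall m \near \oo, a m != 0 by apply: nearW => // m; exact: (aB m).2.
have b_neq0 := negligible_neq0 a_neq0 ab_a.
have [c [Yc bc]] := approximates_seq YX (filterS (fun m bm => conj (Xb m) bm) b_neq0)
  (negligible_cvg0 a0 ab_a).
have ac := negligible_trans ab_a bc.
by exists c; split=> //; split=> //; exact: negligible_sym ac.
Qed.

Lemma approximates_LD A : approximates (LD A) A.
Proof.
move=> y yA y0 e e_gt0.
apply: (near_oo_by_direction (u := y) yA) => g l g_ge bad gl.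
have Dl : Dir A l.
  exists (y \o g); split=> [k|]; first exact: (bad k).1.
  by split=> //; exact: seq_cvg_subseq g_ge y0.
have [N glN] := gl e e_gt0.
apply: (bad N).2; exists (enorm (y (g N)) *: l).
  by exists (enorm (y (g N))), l; split; [exact: enorm_ge0 | split].
by rewrite enormB_scale_dirv mulrC ler_wpM2r ?enorm_ge0 ?ltW ?glN.
Qed.

Lemma SSP_approximates_LD A : SSP A -> approximates A (LD A).
Proof.
move=> [_ ssp] y yLD y0 e e_gt0.
apply: (near_oo_by_direction (u := y) yLD) => g l g_ge bad gl.
have Dl : Dir A l.
  by apply: Dir_closed gl => k; have [[LDy y_neq0] _] := bad k; exact: dirv_LD.
have [b [Ab [yb _]]] := ssp (y \o g) (fun k => conj I (bad k).1.2)
  (seq_cvg_subseq g_ge y0) (ex_intro _ l (conj Dl gl)).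
have [N ybN] := yb e e_gt0.
by apply: (bad N).2; exists (b N); [exact: Ab | exact: ybN].
Qed.

Lemma approximates_ball S T r : 0 < r -> approximates S T ->
  approximates (S `&` eball0 r) (T `&` eball0 r).
Proof.
move=> r_gt0 ST y yT y0 e e_gt0.
have e1_gt0 : 0 < Num.min e 1 by rewrite lt_min e_gt0 ltr01.
have r2_gt0 : 0 < r / 2 by rewrite divr_gt0.
have yT' : \forall m \near \oo, T (y m) /\ y m != 0 by apply: filterS yT => m [[]].
near=> m.
have [z Sz yz_le] : exists2 z, S z & enorm (y m - z) <= Num.min e 1 * enorm (y m).
  by near: m; exact: ST.
have y_lt : enorm (y m - 0) < r / 2 by near: m; exact: (proj1 (seq_cvgP _ _) y0).
have min_le1 : Num.min e 1 <= 1 by rewrite ge_min lexx orbT.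
have min_le : Num.min e 1 <= e by rewrite ge_min lexx.
have := enorm_ge0 (y m); have := enorm_le_distD z (y m); rewrite subr0 enormB in y_lt *.
by move=> z_le y_ge0; exists z; [split=> //; rewrite /eball0 /=|]; nra.
Unshelve. all: by end_near. Qed.

End Approximation.

Section BiLipschitz.
Variables (R : realType) (n : nat) (h : 'rV[R]_n -> 'rV[R]_n) (r K1 K2 : R).
Hypothesis h_bilip : bilip_homeo_germ h r K1 K2.
Local Notation vec := 'rV[R]_n.

Lemma bilip_enorm_ge (x : vec) : enorm x < r -> K1 * enorm x <= enorm (h x).
Proof.
have [h0 [r_gt0 [_ [_ [hlip _]]]]] := h_bilip.
have ball0 : enorm (0 : vec) < r by rewrite enorm0.
by move=> xr; have [] := hlip x 0 xr ball0; rewrite h0 !subr0.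
Qed.

Lemma approximates_image (S T : set vec) : S `<=` eball0 r -> T `<=` eball0 r ->
  approximates S T -> approximates (h @` S) (h @` T).
Proof.
have [h0 [_ [K1_gt0 [K12 [hlip _]]]]] := h_bilip.
have K2_gt0 : 0 < K2 := lt_le_trans K1_gt0 K12.
move=> Sr Tr ST y yhT y0 e e_gt0.
have /choice[w wP] : forall m, exists w, (h @` T) (y m) -> T w /\ h w = y m.
  move=> m; case: (pselect ((h @` T) (y m))) => [[w Tw hw]|not_img]; first by exists w.
  by exists 0 => /not_img.
have wT : \forall m \near \oo, [/\ T (w m), w m != 0 & h (w m) = y m].
  apply: filterS yhT => m [/wP[Tw hw] y_neq0]; split=> //.
  by apply: contraNneq y_neq0 => w0; rewrite -hw w0 h0.
have Kw_le : \forall m \near \oo, K1 * enorm (w m) <= enorm (y m).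
  by apply: filterS wT => m [Tw _ <-]; exact/bilip_enorm_ge/Tr.
have w0 : seq_cvg w 0.
  apply/seq_cvgP => e' e'_gt0; have Ke'_gt0 : 0 < K1 * e' by rewrite mulr_gt0.
  near=> m; rewrite subr0 -(ltr_pM2l K1_gt0).
  apply: le_lt_trans (_ : K1 * enorm (w m) <= enorm (y m)) _; first by near: m.
  by rewrite -[y m]subr0; near: m; exact: (proj1 (seq_cvgP _ _) y0).
have c_gt0 : 0 < e * K1 / K2 by rewrite divr_gt0 ?mulr_gt0.
have cK2 : e * K1 / K2 * K2 = e * K1 by rewrite mulfVK ?gt_eqF.
near=> m.
have [Tw _ hw] : [/\ T (w m), w m != 0 & h (w m) = y m] by near: m.
have Kw : K1 * enorm (w m) <= enorm (y m) by near: m.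
have [z Sz wz_le] : exists2 z, S z & enorm (w m - z) <= e * K1 / K2 * enorm (w m).
  by near: m; apply: ST w0 _ c_gt0; apply: filterS wT => k [].
exists (h z); first by exists z.
rewrite -{1}hw; apply: le_trans (hlip _ _ (Tr _ Tw) (Sr _ Sz)).2 _.
apply: le_trans (ler_wpM2l (ltW K2_gt0) wz_le) _.
by rewrite mulrA [K2 * _]mulrC cK2 -mulrA ler_pM2l.
Unshelve. all: by end_near. Qed.

End BiLipschitz.

Theorem theorem2p13 (R : realType) (n : nat) (h : 'rV[R]_n -> 'rV[R]_n)
  (r K1 K2 : R) (A B : set 'rV[R]_n) :
  bilip_homeo_germ h r K1 K2 ->
  zero_in_closure A -> zero_in_closure B ->
  SSP A ->
  (SSP_rel (h @` (A `&` eball0 r)) B <-> SSP_rel (h @` (LD A `&` eball0 r)) B).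
Proof.
move=> h_bilip _ _ sspA.
have r_gt0 : 0 < r by case: h_bilip => _ [].
have ball_sub (C : set 'rV[R]_n) : C `&` eball0 r `<=` eball0 r by move=> x [].
have A_LD := approximates_image h_bilip (ball_sub _) (ball_sub _)
  (approximates_ball r_gt0 (SSP_approximates_LD sspA)).
have LD_A := approximates_image h_bilip (ball_sub _) (ball_sub _)
  (approximates_ball r_gt0 (approximates_LD (A := A))).
by split; apply: SSP_rel_approximates.
Qed.
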